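(* There is a constant $c_2\in(0,\infty)$ such that for all $\beta\in(0,\infty)$, $\Delta\in(0,1)$, even $L\ge2$, $\theta^\star\in[0,2\pi)$ and $\alpha\in\{1,2,3\}$: if $\widetilde\chi_{\Delta,L}(\boldsymbol\theta)=1$ and $\tilde{\boldsymbol\theta}=(\tilde\theta_{\boldsymbol r})$ is obtained by setting $\tilde\theta_{\boldsymbol r}=\theta_{\boldsymbol r}$ for $\boldsymbol r$ with even $\alpha$-th coordinate and $\tilde\theta_{\boldsymbol r}=2\phi_\alpha-\theta_{\boldsymbol r}$ for $\boldsymbol r$ with odd $\alpha$-th coordinate (all $\tilde\theta_{\boldsymbol r}$ taken as real representatives within $\Delta$ of $\theta^\star$), then $$\bigl|\beta\mathscr H_L(\boldsymbol\theta)-\widetilde{\mathscr I}_{L,\alpha}(\tilde{\boldsymbol\theta})\bigr|\le c_2(\beta J)\Delta^3L^3.$$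
   Context: $\mathscr H_L(\boldsymbol\theta)=\frac J2\sum_{\boldsymbol r\in\mathbb T_L}\sum_{\gamma=1}^3(\cos(\theta_{\boldsymbol r}-\phi_\gamma)-\cos(\theta_{\boldsymbol r+\hat{\mathrm e}_\gamma}-\phi_\gamma))^2$ with $\phi_1=0,\phi_2=\tfrac{2\pi}3,\phi_3=-\tfrac{2\pi}3$, $J>0$. $\widetilde\chi_{\Delta,L}$ is the indicator that $|\theta_{\boldsymbol r}-\theta^\star|<\Delta$ (mod $2\pi$) for $\boldsymbol r$ with even $\alpha$-th coordinate and $|\theta_{\boldsymbol r}-(2\phi_\alpha-\theta^\star)|<\Delta$ for $\boldsymbol r$ with odd $\alpha$-th coordinate. With $q_1=\sin^2\theta^\star$, $q_2=\sin^2(\theta^\star-\tfrac{2\pi}3)$, $q_3=\sin^2(\theta^\star+\tfrac{2\pi}3)$, let $q^{(\alpha)}_{\gamma,\boldsymbol r}=q_\gamma$ if the $\alpha$-th coordinate of $\boldsymbol r$ is even, while for odd $\alpha$-th coordinate $q^{(\alpha)}_{\alpha,\boldsymbol r}=q_\alpha$ and the two values $q_{\gamma'}$, $\gamma'\ne\alpha$, are interchanged. Define $\widetilde{\mathscr I}_{L,\alpha}(\boldsymbol\theta)=\frac{\beta J}2\sum_{\boldsymbol r\in\mathbb T_L}\sum_{\gamma=1}^3q^{(\alpha)}_{\gamma,\boldsymbol r}(\theta_{\boldsymbol r}-\theta_{\boldsymbol r+\hat{\mathrm e}_\gamma})^2$. *)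

From HB Require Import structures.
From mathcomp Require Import all_boot all_order all_algebra.
From mathcomp Require Import all_classical all_reals all_analysis.
Set Implicit Arguments. Unset Strict Implicit. Unset Printing Implicit Defensive.
Import Order.TTheory GRing.Theory Num.Theory.
Local Open Scope ring_scope.

(* Sites of the torus T_L = (Z/LZ)^3; coordinate index gamma in {1,2,3}
   is represented by 'I_3 = {0,1,2} (gamma = k+1). *)
Definition site (L : nat) := {ffun 'I_3 -> 'I_L}.

Definition shift (L : nat) (r : site L) (g : 'I_3) : site L :=
  [ffun k => if k == g then ordS (r k) else r k].

Definition phi {R : realType} (g : 'I_3) : R :=
  if val g == 0%N then 0
  else if val g == 1%N then 2 * pi / 3 else - (2 * pi / 3).

Definition near_mod {R : realType} (x a D : R) : Prop :=
  exists k : int, `|x - a - k%:~R * (2 * pi)| < D.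

Definition ham {R : realType} (J : R) (L : nat) (th : site L -> R) : R :=
  J / 2 * \sum_(r : site L) \sum_(g : 'I_3)
     (cos (th r - phi g) - cos (th (shift r g) - phi g)) ^+ 2.

Definition chi_tilde {R : realType} (D : R) (L : nat) (ths : R) (a : 'I_3)
  (th : site L -> R) : Prop :=
  forall r : site L,
    if odd (r a) then near_mod (th r) (2 * phi a - ths) D
    else near_mod (th r) ths D.

Definition qg {R : realType} (ths : R) (g : 'I_3) : R := (sin (ths - phi g)) ^+ 2.

(* the index gamma' different from both a and g (for a <> g) *)
Definition other_idx (a g : 'I_3) : 'I_3 := inord (3 - a - g).

Definition q_alpha {R : realType} (ths : R) (L : nat) (a : 'I_3) (g : 'I_3)
  (r : site L) : R :=
  if odd (r a) && (g != a) then qg ths (other_idx a g) else qg ths g.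

Definition I_tilde {R : realType} (beta J : R) (L : nat) (ths : R) (a : 'I_3)
  (th : site L -> R) : R :=
  beta * J / 2 * \sum_(r : site L) \sum_(g : 'I_3)
     q_alpha ths a g r * (th r - th (shift r g)) ^+ 2.

(* tht is the reflected configuration theta~, with real representatives
   within D of theta* *)
Definition reflected_rep {R : realType} (D : R) (L : nat) (ths : R) (a : 'I_3)
  (th tht : site L -> R) : Prop :=
  forall r : site L,
    `|tht r - ths| < D /\
    if odd (r a) then exists k : int, tht r = 2 * phi a - th r + k%:~R * (2 * pi)
    else exists k : int, tht r = th r + k%:~R * (2 * pi).

(* After the reflection θ ↦ 2φ_α − θ on the sites with odd α-th coordinate,
   cos(θ_r − φ_γ) = cos(θ̃_r − ψ), where ψ = φ_γ on even sites and
   ψ = 2φ_α − φ_γ on odd ones; both ends of a γ-bond see the same ψ, because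
   for γ = α the two values coincide.  Every θ̃_r lies within Δ of θ*, so a
   first-order expansion of the cosine around θ* gives
   (cos x − cos y)² = sin²(θ* − ψ)(x − y)² + O(Δ³), and sin²(θ* − ψ) is
   precisely the coupling q^(α)_{γ,r}.  Summing the O(Δ³) errors over the
   3L³ bonds gives the bound. *)

From Pilot Require Import Defs.
From HB Require Import structures.
From mathcomp Require Import all_boot all_order all_algebra.
From mathcomp Require Import all_classical all_reals all_analysis.
From mathcomp Require Import ring lra.
Import Order.TTheory GRing.Theory Num.Theory numFieldNormedType.Exports.
Local Open Scope ring_scope.
Set Implicit Arguments.
Unset Strict Implicit.

Lemma periodicz (U V : zmodType) (f : U -> V) (T : U) :
  periodic f T -> forall (k : int) (a : U), f (a + T *~ k) = f a.
Proof.
move=> fT [] n a; first exact: periodicn.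
rewrite NegzE mulrNz.
by rewrite -[in RHS](subrK (T *~ n.+1) a) (periodicn fT).
Qed.

Section Trigonometry.
Variable R : realType.
Implicit Types x y t D M : R.

Lemma cosDz2pi x (k : int) : cos (x + k%:~R * (2 * pi)) = cos x.
Proof. by rewrite mulrzl mulr_natl (periodicz (@cosD2pi R)). Qed.

Lemma sinDz2pi x (k : int) : sin (x + k%:~R * (2 * pi)) = sin x.
Proof. by rewrite mulrzl mulr_natl (periodicz (@sinD2pi R)). Qed.

Lemma lipschitz_derive_bounded (f df : R -> R) M x y :
  (forall z : R, is_derive z (1 : R) f (df z)) -> x <= y ->
  (forall z, x <= z <= y -> `|df z| <= M) ->
  `|f y - f x| <= M * (y - x).
Proof.
move=> fd xy dM.
have fc z : {for z, continuous f}.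
  apply/differentiable_continuous/derivable1_diffP.
  exact: (@ex_derive _ _ _ _ _ _ _ (fd z)).
have [c cxy ->] : exists2 c, c \in `[x, y]%R & f y - f x = df c * (y - x).
  apply: MVT_segment xy (fun z _ => fd z) _.
  by apply: continuous_subspaceT => z; exact: fc.
rewrite normrM (ger0_norm (_ : 0 <= y - x)) ?subr_ge0 //.
apply: ler_wpM2r; first by rewrite subr_ge0.
by apply: dM; rewrite in_itv /= in cxy.
Qed.

Lemma sin_lipschitz x y : `|sin x - sin y| <= `|x - y|.
Proof.
wlog yx : x y / y <= x.
  by move=> H; case: (leP y x) => [/H//|/ltW /H]; rewrite distrC (distrC y).
have := lipschitz_derive_bounded (@is_derive_sin R) yx (fun z _ => cos_max z).
by rewrite mul1r (ger0_norm (_ : 0 <= x - y)) ?subr_ge0.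
Qed.

(* Mean value theorem for [cos z + z sin t], whose derivative [sin t - sin z]
   is at most [D] for [z] within [D] of [t]. *)
Lemma cos_linear_approx x y t D : `|x - t| < D -> `|y - t| < D ->
  `|cos x - cos y + sin t * (x - y)| <= D * `|x - y|.
Proof.
wlog yx : x y / y <= x.
  move=> H hx hy; case: (leP y x) => [yx|/ltW yx]; first exact: H.
  have := H y x yx hy hx.
  by rewrite (distrC y x) -[X in _ -> X <= _]normrN; congr (`|_| <= _); ring.
move=> hx hy.
have fd (z : R) : is_derive z (1 : R) (fun z => cos z + sin t * z) (- sin z + sin t).
  apply: is_deriveD; rewrite -[sin t]mulr1 -[X in is_derive _ _ _ X]scaler1.
  exact: is_deriveZ.
have := lipschitz_derive_bounded (M := D) fd yx.
rewrite (ger0_norm (_ : 0 <= x - y)) ?subr_ge0 //.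
have -> : cos x + sin t * x - (cos y + sin t * y) = cos x - cos y + sin t * (x - y).
  by ring.
apply=> z /andP[yz zx]; rewrite addrC.
apply: le_trans (sin_lipschitz _ _) _.
move: hx hy; rewrite !ltr_norml ler_norml => /andP[? ?] /andP[? ?].
by apply/andP; split; lra.
Qed.

Lemma cos_diff_sqr_approx x y t D : D <= 1 -> `|x - t| < D -> `|y - t| < D ->
  `|(cos x - cos y) ^+ 2 - sin t ^+ 2 * (x - y) ^+ 2| <= 12 * D ^+ 3.
Proof.
move=> D1 hx hy.
have lin := cos_linear_approx hx hy.
have D0 : 0 <= D by apply: le_trans (ltW hx).
have hxy : `|x - y| <= 2 * D.
  move: hx hy; rewrite !ltr_norml ler_norml => /andP[? ?] /andP[? ?].
  by apply/andP; split; lra.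
move: lin hxy (sin_max t).
set d := cos x - cos y; set h := x - y; set s := sin t => lin hxy s1.
have -> : d ^+ 2 - s ^+ 2 * h ^+ 2 = (d + s * h) * (d + s * h - 2 * s * h) by ring.
have h3 : `|d + s * h - 2 * s * h| <= 3 * `|h|.
  apply: le_trans (ler_normB _ _) _.
  rewrite -mulrA normrM (normrM s) ger0_norm //.
  have : `|s| * `|h| <= `|h| by rewrite ler_piMl.
  have : D * `|h| <= `|h| by rewrite ler_piMl.
  lra.
rewrite normrM; apply: le_trans (ler_pM _ _ lin h3) _ => //.
have hh : `|h| * `|h| <= 2 * D * (2 * D) by apply: ler_pM.
have : D * (`|h| * `|h|) <= D * (2 * D * (2 * D)) by rewrite ler_wpM2l.
rewrite !exprS expr0; nra.
Qed.

End Trigonometry.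

Lemma phi_reflect (R : realType) (a g : 'I_3) : g != a ->
  exists k : int, 2 * phi a - phi g = phi (other_idx a g) + k%:~R * (2 * pi) :> R.
Proof.
have val_inord n : (n < 3)%N -> val (inord n : 'I_3) = n := @inordK 2 n.
case: a => -[|[|[|?]]] ? //; case: g => -[|[|[|?]]] ? //;
  rewrite /other_idx /phi => _; rewrite !val_inord //=.
all: first [by exists 0; rewrite mul0r; lra
           | by exists 1; rewrite mul1r; lra
           | by exists (-1); rewrite mulN1r; lra].
Qed.

(* The phase [ψ] that replaces [φ_γ] after reflecting the sites with odd
   [α]-th coordinate. *)
Definition reflected_phase {R : realType} (odd_site : bool) (a g : 'I_3) : R :=
  if odd_site then 2 * phi a - phi g else phi g.

Section ReflectedConfiguration.
Variables (R : realType) (D ths : R) (L : nat) (a : 'I_3) (th tht : site L -> R).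
Hypothesis refl : reflected_rep D ths a th tht.

Lemma cos_reflected_rep (g : 'I_3) (r : site L) :
  cos (th r - phi g) = cos (tht r - reflected_phase (odd (r a)) a g).
Proof.
have [_] := refl r; rewrite /reflected_phase; case: (odd (r a)) => -[k ->].
- have -> : 2 * phi a - th r + k%:~R * (2 * pi) - (2 * phi a - phi g) =
            - (th r - phi g) + k%:~R * (2 * pi) by ring.
  by rewrite cosDz2pi cosN.
- have -> : th r + k%:~R * (2 * pi) - phi g = th r - phi g + k%:~R * (2 * pi).
    by ring.
  by rewrite cosDz2pi.
Qed.

Lemma reflected_phase_shift (g : 'I_3) (r : site L) :
  reflected_phase (odd (Defs.shift r g a)) a g = reflected_phase (odd (r a)) a g :> R.
Proof.
case: (eqVneq g a) => [->|ga].
  by rewrite /reflected_phase; do 2 case: odd => //; ring.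
by rewrite /Defs.shift ffunE eq_sym (negbTE ga).
Qed.

Lemma q_alpha_reflected_phase (g : 'I_3) (r : site L) :
  q_alpha ths a g r = sin (ths - reflected_phase (odd (r a)) a g) ^+ 2.
Proof.
rewrite /q_alpha /qg /reflected_phase; case: (odd (r a)) => //=.
case: (eqVneq g a) => [->|ga] /=; first by congr (sin _ ^+ 2); ring.
have [k ->] := phi_reflect R ga.
have -> : ths - (phi (other_idx a g) + k%:~R * (2 * pi)) =
          ths - phi (other_idx a g) + (- k)%:~R * (2 * pi) by rewrite mulrNz; ring.
by rewrite sinDz2pi.
Qed.

Lemma bond_term_approx (g : 'I_3) (r : site L) : D <= 1 ->
  `|(cos (th r - phi g) - cos (th (Defs.shift r g) - phi g)) ^+ 2
    - q_alpha ths a g r * (tht r - tht (Defs.shift r g)) ^+ 2| <= 12 * D ^+ 3.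
Proof.
move=> D1; set r' := Defs.shift r g.
rewrite !cos_reflected_rep reflected_phase_shift q_alpha_reflected_phase.
set ps := reflected_phase _ a g.
have [near_r _] := refl r; have [near_r' _] := refl r'.
have := @cos_diff_sqr_approx R (tht r - ps) (tht r' - ps) (ths - ps) D D1.
have -> : tht r - ps - (ths - ps) = tht r - ths by ring.
have -> : tht r' - ps - (ths - ps) = tht r' - ths by ring.
have -> : tht r - ps - (tht r' - ps) = tht r - tht r' by ring.
exact.
Qed.

End ReflectedConfiguration.

Lemma norm_sum_bonds_le (R : realType) (L : nat) (F : site L -> 'I_3 -> R) (M : R) :
  (forall r g, `|F r g| <= M) ->
  `|\sum_(r : site L) \sum_(g : 'I_3) F r g| <= (L ^ 3)%:R * (3 * M).
Proof.
move=> FM.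
have -> : (L ^ 3)%:R * (3 * M) = \sum_(r : site L) \sum_(g : 'I_3) M.
  by rewrite !sumr_const /site card_ffun !card_ord !mulr_natl.
apply: le_trans (ler_norm_sum _ _ _) _; apply: ler_sum => r _.
apply: le_trans (ler_norm_sum _ _ _) _; apply: ler_sum => g _.
exact: FM.
Qed.

Theorem lemma4p6 (R : realType) :
  exists c2 : R, 0 < c2 /\
  forall (beta J D : R) (L : nat) (ths : R) (a : 'I_3) (th tht : site L -> R),
    0 < beta -> 0 < J -> 0 < D -> D < 1 ->
    ~~ odd L -> (2 <= L)%N ->
    0 <= ths -> ths < 2 * pi ->
    chi_tilde D ths a th ->
    reflected_rep D ths a th tht ->
    `|beta * ham J th - I_tilde beta J ths a tht|
      <= c2 * (beta * J) * D ^+ 3 * (L%:R) ^+ 3.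
Proof.
exists 18; split; first lra.
move=> beta J D L ths a th tht beta0 J0 D0 D1 _ _ _ _ _ refl.
have bonds := norm_sum_bonds_le (fun r g => bond_term_approx refl g r (ltW D1)).
rewrite /ham /I_tilde.
set S1 := \sum_(r : site L) _; set S2 := \sum_(r : site L) _.
have -> : beta * (J / 2 * S1) - beta * J / 2 * S2 = beta * J / 2 * (S1 - S2) by ring.
rewrite /S1 /S2 -sumrB; under eq_bigr do rewrite -sumrB.
have bJ : 0 <= beta * J / 2 by rewrite divr_ge0 // mulr_ge0 // ltW.
rewrite normrM (ger0_norm bJ); apply: le_trans (ler_wpM2l bJ bonds) _.
rewrite natrX le_eqVlt; apply/predU1P; left.
by move: (L%:R ^+ 3) (D ^+ 3) => u v; field.
Qed.
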